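(* Let $A$ be a real $n\times n$ matrix and $\mathbf{c},\mathbf{d}\in\mathbb{R}^n$ with $A+A^T=\mathbf{c}\mathbf{d}^T$, let $K=A-\tfrac12\mathbf{c}\mathbf{d}^T$, $d_{\min}=\min_id_i$, $d_{\max}=\max_id_i$, and define the correspondence $F$ on $[d_{\min},d_{\max}]$ by \[ F(\lambda)=\{\mathbf{d}^T\mathbf{x}:\ (\mathbf{x},\pi)\text{ is an optimal solution of }LP(\lambda)\text{ for some }\pi\in\mathbb{R}\}. \] Then: (i) for every $\lambda\in[d_{\min},d_{\max}]$, $F(\lambda)$ is a nonempty convex subset of $[d_{\min},d_{\max}]$; (ii) if $\lambda\in[d_{\min},d_{\max}]$ and $(\mathbf{x},\pi)$ is an optimal solution of $LP(\lambda)$ with $\mathbf{d}^T\mathbf{x}=\lambda$, then $\mathbf{x}$ is a symmetric Nash equilibrium of $(A,A^T)$; (iii) if $\mathbf{x}$ is a symmetric Nash equilibrium of $(A,A^T)$, then $\lambda=\mathbf{d}^T\mathbf{x}$ lies in $[d_{\min},d_{\max}]$ and $\lambda\in F(\lambda)$. Consequently the fixed points of $F$ are exactly the values $\mathbf{d}^T\mathbf{x}$ for symmetric Nash equilibria $\mathbf{x}$ of $(A,A^T)$.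
   Context: For fixed $\lambda\in\mathbb{R}$, $LP(\lambda)$ is the linear program in variables $\mathbf{x}\in\mathbb{R}^n,\pi\in\mathbb{R}$: maximize $\tfrac12\lambda\,\mathbf{x}^T\mathbf{c}-\pi$ subject to $K\mathbf{x}+\tfrac{\lambda}{2}\mathbf{c}\le\pi\mathbf{1}$ (componentwise), $\mathbf{x}\ge0$, $\sum_ix_i=1$; $\mathbf{1}$ is the all-ones vector. A probability vector $\mathbf{x}$ is a symmetric Nash equilibrium of $(A,A^T)$ if $(\mathbf{x},\mathbf{x})$ is a Nash equilibrium, equivalently, $x_i>0$ implies $(A\mathbf{x})_i=\max_k(A\mathbf{x})_k$. *)

From HB Require Import structures.
From mathcomp Require Import all_boot all_order all_algebra.
Set Implicit Arguments. Unset Strict Implicit. Unset Printing Implicit Defensive.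
Import Order.TTheory GRing.Theory Num.Theory.
Local Open Scope ring_scope.

Section Defs.
Variable (R : realFieldType) (n : nat).

Definition dotv (u v : 'cV[R]_n) : R := \sum_(i < n) u i 0 * v i 0.

Definition Kmat (A : 'M[R]_n) (c d : 'cV[R]_n) : 'M[R]_n :=
  A - 2^-1 *: (c *m d^T).

Definition prob_vec (x : 'cV[R]_n) : Prop :=
  (forall i, 0 <= x i 0) /\ \sum_(i < n) x i 0 = 1.

Definition LP_feasible (K : 'M[R]_n) (c : 'cV[R]_n) (lam : R)
    (x : 'cV[R]_n) (pi : R) : Prop :=
  (forall i, (K *m x) i 0 + lam / 2 * c i 0 <= pi) /\ prob_vec x.

Definition LP_obj (c : 'cV[R]_n) (lam : R) (x : 'cV[R]_n) (pi : R) : R :=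
  lam / 2 * dotv x c - pi.

Definition LP_optimal (K : 'M[R]_n) (c : 'cV[R]_n) (lam : R)
    (x : 'cV[R]_n) (pi : R) : Prop :=
  LP_feasible K c lam x pi /\
  forall x' pi', LP_feasible K c lam x' pi' ->
    LP_obj c lam x' pi' <= LP_obj c lam x pi.

Definition Fcorr (K : 'M[R]_n) (c d : 'cV[R]_n) (lam : R) (v : R) : Prop :=
  exists x pi, LP_optimal K c lam x pi /\ v = dotv d x.

(* d_min, d_max (the default value is an entry of d when n > 0) *)
Definition dmin (d : 'cV[R]_n) : R :=
  \big[Num.min/head 0 [seq d i 0 | i <- enum 'I_n]]_(i < n) d i 0.
Definition dmax (d : 'cV[R]_n) : R :=
  \big[Num.max/head 0 [seq d i 0 | i <- enum 'I_n]]_(i < n) d i 0.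

Definition sym_nash (A : 'M[R]_n) (x : 'cV[R]_n) : Prop :=
  prob_vec x /\
  forall i, 0 < x i 0 -> forall k, (A *m x) k 0 <= (A *m x) i 0.

Definition convex_set (S : R -> Prop) : Prop :=
  forall a b t, S a -> S b -> 0 <= t -> t <= 1 -> S (t * a + (1 - t) * b).

End Defs.

(* K = A - c d^T / 2 is skew-symmetric, so x^T K x = 0 and summing the
   constraints of LP(lam) against x shows that its objective is never positive.
   The value 0 is attained: an optimal strategy of the symmetric zero-sum game
   with skew payoff K_ij + lam/2 (c_i - c_j) is feasible with objective 0, and
   such a strategy exists by Ville's theorem of the alternative, proved here by
   Fourier-Motzkin elimination. Optimal solutions are therefore the feasible
   points of objective 0, a convex set. Since (A x)_i = (K x)_i + c_i (d^T x)/2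
   and x^T A x = (d^T x)(c^T x)/2, for lam = d^T x the constraints read
   (A x)_i <= pi and objective 0 reads pi = x^T A x: no pure strategy does
   better against x than x itself, which is the symmetric equilibrium
   condition. *)

From HB Require Import structures.
From mathcomp Require Import all_boot all_order all_algebra.
From mathcomp Require Import ring lra.
Import Order.TTheory GRing.Theory Num.Theory.
Local Open Scope ring_scope.
Set Implicit Arguments. Unset Strict Implicit. Unset Printing Implicit Defensive.

Section Alternative.
Variable R : realFieldType.

Lemma sum_mul_delta (J : finType) (f : J -> R) (a : J) :
  \sum_l f l * (a == l)%:R = f a.
Proof.
rewrite (bigD1 a) //= eqxx mulr1 big1 ?addr0 // => l.
by rewrite eq_sym => /negbTE ->; rewrite mulr0.
Qed.

Lemma exists_between (I : finType) (P Q : pred I) (lo hi : I -> R) (b : R) :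
  (forall j, Q j -> b < hi j) -> (forall k j, P k -> Q j -> lo k < hi j) ->
  exists t, [/\ b <= t, forall k, P k -> lo k < t & forall j, Q j -> t < hi j].
Proof.
move=> b_hi lo_hi.
set L := \big[Num.max/b]_(k | P k) lo k.
set U := \big[Num.min/(L + 1)]_(j | Q j) hi j.
have LU : L < U.
  apply: lt_bigmin => [|j Qj]; first by rewrite ltrDl ltr01.
  by apply: bigmax_lt => [|k Pk]; [exact: b_hi | exact: lo_hi].
have bL : b <= L by exact: bigmax_ge_id.
have lo_L k : P k -> lo k <= L by exact: le_bigmax_cond.
have U_hi j : Q j -> U <= hi j by exact: bigmin_le_cond.
exists ((L + U) / 2); split.
- lra.
- by move=> k /lo_L; lra.
- by move=> j /U_hi; lra.
Qed.

Section FourierMotzkin.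
Variables (J : finType) (r : J -> R).

(* The columns of the system with the row [r] eliminated: the columns [j]
   with [r j <= 0] and the combinations [r k e_j - r j e_k] with
   [r j <= 0 < r k], which generate the cone [{x >= 0 | r x <= 0}]. *)
Definition fm_index :=
  ({j : J | r j <= 0} + {p : J * J | (r p.1 <= 0) && (0 < r p.2)})%type.

Definition fm_comb (f : J -> R) (q : fm_index) : R :=
  match q with
  | inl j => f (val j)
  | inr p => r (val p).2 * f (val p).1 - r (val p).1 * f (val p).2
  end.

Lemma fm_comb_sum (I : finType) (y : I -> R) (M : I -> J -> R) q :
  fm_comb (fun l => \sum_i y i * M i l) q = \sum_i y i * fm_comb (M i) q.
Proof.
case: q => [j|p] //=.
by rewrite !mulr_sumr -sumrB; apply: eq_bigr => i _; ring.
Qed.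

Lemma fm_combE f q : fm_comb f q = \sum_l f l * fm_comb (fun l' => (l' == l)%:R) q.
Proof.
by rewrite -fm_comb_sum; case: q => [j|p] /=; rewrite !sum_mul_delta.
Qed.

Lemma fm_comb_delta_ge0 l q : 0 <= fm_comb (fun l' => (l' == l)%:R) q.
Proof.
case: q => [j|[[j k] /= /andP [rj rk]]] /=; first by rewrite ler0n.
rewrite subr_ge0; apply: (@le_trans _ _ 0).
  by apply: mulr_le0_ge0 => //; rewrite ler0n.
by apply: mulr_ge0; [exact: ltW | rewrite ler0n].
Qed.

Lemma fm_comb1_gt0 q : 0 < fm_comb (fun=> 1) q.
Proof.
case: q => [j|[[j k] /= /andP [rj rk]]] /=; first exact: ltr01.
by rewrite !mulr1 subr_gt0; exact: le_lt_trans rj rk.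
Qed.

Lemma fm_comb_le0 q : fm_comb r q <= 0.
Proof. by case: q => [[j rj]|[[j k] _]] //=; rewrite mulrC subrr. Qed.

Lemma fm_lift_primal (I : finType) (M : I -> J -> R) (x' : fm_index -> R) :
  (forall q, 0 <= x' q) -> 0 < \sum_q x' q ->
  exists x : J -> R, [/\ forall j, 0 <= x j, 0 < \sum_j x j,
    \sum_j r j * x j <= 0 &
    forall i, \sum_j M i j * x j = \sum_q fm_comb (M i) q * x' q].
Proof.
move=> x'_ge0 x'_pos.
pose x l := \sum_q x' q * fm_comb (fun l' => (l' == l)%:R) q.
have xE f : \sum_l f l * x l = \sum_q fm_comb f q * x' q.
  under eq_bigr => l _ do rewrite mulr_sumr.
  rewrite exchange_big /=; apply: eq_bigr => q _.
  by rewrite fm_combE mulr_suml; apply: eq_bigr => l _; ring.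
exists x; split.
- by move=> l; apply: sumr_ge0 => q _; rewrite mulr_ge0 ?fm_comb_delta_ge0.
- have -> : \sum_j x j = \sum_j (fun=> 1) j * x j.
    by apply: eq_bigr => j _; rewrite mul1r.
  have w_ge0 q : 0 <= fm_comb (fun=> 1) q * x' q.
    by rewrite mulr_ge0 // ltW ?fm_comb1_gt0.
  have [q /andP [_ x'q]] : exists q, true && (0 < x' q).
    by apply: psumr_neq0P => //; apply/eqP; rewrite gt_eqF.
  rewrite xE lt0r sumr_ge0 // andbT psumr_neq0 //.
  by apply/hasP; exists q; rewrite ?mem_index_enum //= mulr_gt0 ?fm_comb1_gt0.
- by rewrite xE; apply: sumr_le0 => q _; rewrite mulr_le0_ge0 ?fm_comb_le0.
- by move=> i; rewrite xE.
Qed.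

Lemma fm_lift_dual (a : J -> R) :
  (forall q, 0 < fm_comb a q) -> exists2 t, 0 <= t & forall j, 0 < a j + t * r j.
Proof.
move=> a_pos.
have col_pos j : r j <= 0 -> 0 < a j by move=> rj; exact: (a_pos (inl (exist _ j rj))).
have pair_pos j k : r j <= 0 -> 0 < r k -> 0 < r k * a j - r j * a k.
  move=> rj rk; have rjk : (r (j, k).1 <= 0) && (0 < r (j, k).2) by rewrite rj rk.
  exact: (a_pos (inr (exist _ (j, k) rjk))).
have hi_pos j : r j < 0 -> 0 < a j / - r j.
  by move=> rj; rewrite divr_gt0 ?col_pos ?ltW // oppr_gt0.
have lo_hi k j : 0 < r k -> r j < 0 -> - a k / r k < a j / - r j.
  move=> rk rj; have := pair_pos j k (ltW rj) rk.
  rewrite -oppr_gt0 in rj; rewrite ltr_pdivrMr // mulrAC ltr_pdivlMr //.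
  move: (a j) (a k) (r j) (r k) rj rk => aj ak rj' rk' h1 h2 h3; nra.
have [t [t_ge0 lo_t t_hi]] := exists_between hi_pos lo_hi.
exists t => // j; case: (ltrgtP (r j) 0) => rj.
- have := t_hi j rj; rewrite ltr_pdivlMr ?oppr_gt0 //; lra.
- have := lo_t j rj; rewrite ltr_pdivrMr //; lra.
- by rewrite rj mulr0 addr0 col_pos // rj.
Qed.

End FourierMotzkin.
Arguments fm_comb {J} r f q.

Lemma ville (m : nat) (J : finType) (M : 'I_m -> J -> R) :
  (exists x : J -> R, [/\ forall j, 0 <= x j, 0 < \sum_j x j &
     forall i, \sum_j M i j * x j <= 0])
  \/ (exists y : 'I_m -> R, (forall i, 0 <= y i) /\
     forall j, 0 < \sum_i y i * M i j).
Proof.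
elim: m J M => [|m IH] J M.
  case: (pickP (@predT J)) => [j0 _|J0]; last first.
    by right; exists (fun=> 0); split=> // j; have := J0 j.
  left; exists (fun j => (j0 == j)%:R); split=> [j||[]//].
    by rewrite ler0n.
  have := sum_mul_delta (fun=> 1 : R) j0; under eq_bigr do rewrite mul1r.
  by move=> ->; exact: ltr01.
pose r := M ord0; pose M' i := M (lift ord0 i).
have [[x' [x'_ge0 x'_pos x'_le0]]|[y' [y'_ge0 y'_pos]]] :=
  IH _ (fun i => fm_comb r (M' i)).
- have [x [x_ge0 x_pos rx_le0 Mx]] := fm_lift_primal M' x'_ge0 x'_pos.
  left; exists x; split=> // i; case: (unliftP ord0 i) => [i'|] ->; last exact: rx_le0.
  by rewrite Mx; apply: le_trans (x'_le0 i'); under eq_bigr do rewrite mulrC.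
- have a_pos q : 0 < fm_comb r (fun l => \sum_i y' i * M' i l) q.
    by rewrite fm_comb_sum; exact: y'_pos.
  have [t t_ge0 ta_pos] := fm_lift_dual a_pos.
  right; exists (fun i => oapp y' t (unlift ord0 i)); split.
    by move=> i; case: (unlift ord0 i) => /=.
  move=> j; rewrite big_ord_recl unlift_none addrC /=.
  by under eq_bigr do rewrite liftK /=; exact: ta_pos.
Qed.

End Alternative.

Section SkewSymmetric.
Variable R : realFieldType.

Lemma skew_quad_eq0 (J : finType) (G : J -> J -> R) (y : J -> R) :
  (forall i j, G i j = - G j i) -> \sum_i y i * \sum_j G i j * y j = 0.
Proof.
move=> G_skew; set S := \sum_i _.
suff : S = - S by lra.
rewrite {1}/S; under eq_bigr => i _ do rewrite mulr_sumr.
rewrite exchange_big /= -sumrN; apply: eq_bigr => j _.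
rewrite mulr_sumr -sumrN; apply: eq_bigr => i _.
by rewrite G_skew; ring.
Qed.

Lemma skew_game_optimal (n : nat) (G : 'I_n -> 'I_n -> R) :
  (0 < n)%N -> (forall i j, G i j = - G j i) ->
  exists x : 'I_n -> R, [/\ forall j, 0 <= x j, \sum_j x j = 1 &
    forall i, \sum_j G i j * x j <= 0].
Proof.
move=> n_gt0 G_skew.
have [[x [x_ge0 x_pos Gx_le0]]|[y [y_ge0 yG_pos]]] := ville G.
  exists (fun j => x j / \sum_k x k); split.
  - by move=> j; rewrite divr_ge0 // ltW.
  - by rewrite -mulr_suml divff // gt_eqF.
  - move=> i; under eq_bigr do rewrite mulrA; rewrite -mulr_suml.
    by rewrite mulr_le0_ge0 // invr_ge0 ltW.
exfalso.
have yGy : \sum_j y j * \sum_i y i * G i j = 0.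
  apply: eq_trans (@skew_quad_eq0 _ (fun j i => G i j) y (fun i j => G_skew j i)).
  by apply: eq_bigr => j _; congr (_ * _); apply: eq_bigr => i _; rewrite mulrC.
have y0 j : y j = 0.
  have := psumr_eq0P (fun j _ => mulr_ge0 (y_ge0 j) (ltW (yG_pos j))) yGy (i := j) isT.
  by move/eqP; rewrite mulf_eq0 (gt_eqF (yG_pos j)) orbF => /eqP.
have := yG_pos (Ordinal n_gt0).
by rewrite big1 ?ltxx // => i _; rewrite y0 mul0r.
Qed.

End SkewSymmetric.

Section Vectors.
Variables (R : realFieldType) (n : nat).
Implicit Types (u v x : 'cV[R]_n) (M : 'M[R]_n).

Lemma dotvC u v : dotv u v = dotv v u.
Proof. by apply: eq_bigr => i _; rewrite mulrC. Qed.

Lemma dotvDr u v w : dotv u (v + w) = dotv u v + dotv u w.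
Proof. by rewrite /dotv -big_split; apply: eq_bigr => i _; rewrite mxE mulrDr. Qed.

Lemma dotvZr a u v : dotv u (a *: v) = a * dotv u v.
Proof. by rewrite /dotv mulr_sumr; apply: eq_bigr => i _; rewrite mxE mulrCA. Qed.

Lemma dotv_skew M x : (forall i j, M i j = - M j i) -> dotv x (M *m x) = 0.
Proof.
move=> M_skew; rewrite -(skew_quad_eq0 (fun i => x i 0) M_skew).
by apply: eq_bigr => i _; rewrite mxE.
Qed.

Lemma prob_dotv_le x u b : prob_vec x -> (forall i, u i 0 <= b) -> dotv x u <= b.
Proof.
move=> [x_ge0 x_sum1] u_le; rewrite -[b]mul1r -x_sum1 mulr_suml.
by apply: ler_sum => i _; rewrite ler_wpM2l.
Qed.

Lemma prob_dotv_ge x u b : prob_vec x -> (forall i, b <= u i 0) -> b <= dotv x u.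
Proof.
move=> [x_ge0 x_sum1] le_u; rewrite -[b]mul1r -x_sum1 mulr_suml.
by apply: ler_sum => i _; rewrite ler_wpM2l.
Qed.

Lemma dotv_prob_range d x : prob_vec x -> dmin d <= dotv d x <= dmax d.
Proof.
move=> x_prob; rewrite dotvC; apply/andP; split.
- by apply: prob_dotv_ge => // i; rewrite /dmin (bigD1 i) //= ge_min lexx.
- by apply: prob_dotv_le => // i; rewrite /dmax (bigD1 i) //= le_max lexx.
Qed.

Lemma prob_vec_comb x1 x2 t : prob_vec x1 -> prob_vec x2 -> 0 <= t <= 1 ->
  prob_vec (t *: x1 + (1 - t) *: x2).
Proof.
move=> [x1_ge0 x1_sum1] [x2_ge0 x2_sum1] /andP [t_ge0 t_le1].
have t'_ge0 : 0 <= 1 - t by rewrite subr_ge0.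
split=> [i|]; first by rewrite !mxE addr_ge0 // mulr_ge0.
under eq_bigr do rewrite !mxE.
by rewrite big_split /= -!mulr_sumr x1_sum1 x2_sum1 !mulr1 addrC subrK.
Qed.

Lemma sym_nashP M x :
  sym_nash M x <-> prob_vec x /\ forall k, (M *m x) k 0 <= dotv x (M *m x).
Proof.
split=> [[x_prob x_best]|[x_prob x_avg]]; split=> // k.
  have [x_ge0 x_sum1] := x_prob.
  rewrite -[_ k 0]mul1r -x_sum1 mulr_suml; apply: ler_sum => l _.
  have := x_ge0 l; rewrite le0r => /orP [/eqP ->|x_pos]; first by rewrite !mul0r.
  by rewrite ler_wpM2l ?x_best ?ltW.
move=> x_pos i; have [x_ge0 x_sum1] := x_prob.
set P := dotv x (M *m x) in x_avg *.
have gap_sum0 : \sum_l x l 0 * (P - (M *m x) l 0) = 0.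
  under eq_bigr do rewrite mulrBr.
  by rewrite sumrB -mulr_suml x_sum1 mul1r subrr.
have gap_ge0 l : true -> 0 <= x l 0 * (P - (M *m x) l 0).
  by move=> _; rewrite mulr_ge0 // subr_ge0.
have /eqP := psumr_eq0P gap_ge0 gap_sum0 (i := k) isT.
by rewrite mulf_eq0 (gt_eqF x_pos) subr_eq0 => /eqP <-; exact: x_avg.
Qed.

End Vectors.

Section LinearProgram.
Variables (R : realFieldType) (n : nat) (K : 'M[R]_n) (c : 'cV[R]_n).

Lemma LP_feasible_comb lam x1 p1 x2 p2 t :
  LP_feasible K c lam x1 p1 -> LP_feasible K c lam x2 p2 -> 0 <= t <= 1 ->
  LP_feasible K c lam (t *: x1 + (1 - t) *: x2) (t * p1 + (1 - t) * p2).
Proof.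
move=> [Kx1_le x1_prob] [Kx2_le x2_prob] t01; split; last exact: prob_vec_comb.
have /andP [t_ge0 t_le1] := t01; have t'_ge0 : 0 <= 1 - t by rewrite subr_ge0.
move=> i; have := lerD (ler_wpM2l t_ge0 (Kx1_le i)) (ler_wpM2l t'_ge0 (Kx2_le i)).
by rewrite mulmxDr -!scalemxAr !mxE; lra.
Qed.

Lemma LP_obj_comb lam x1 p1 x2 p2 t :
  LP_obj c lam (t *: x1 + (1 - t) *: x2) (t * p1 + (1 - t) * p2) =
  t * LP_obj c lam x1 p1 + (1 - t) * LP_obj c lam x2 p2.
Proof. by rewrite /LP_obj dotvC dotvDr !dotvZr !(dotvC c); ring. Qed.

Hypothesis K_skew : forall i j, K i j = - K j i.

Lemma LP_obj_le0 lam x pi : LP_feasible K c lam x pi -> LP_obj c lam x pi <= 0.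
Proof.
move=> [Kx_le x_prob].
have : dotv x (K *m x + (lam / 2) *: c) <= pi.
  by apply: prob_dotv_le => // i; have := Kx_le i; rewrite !mxE.
by rewrite dotvDr dotvZr dotv_skew // add0r /LP_obj subr_le0.
Qed.

Hypothesis n_gt0 : (0 < n)%N.

Lemma LP_value0 lam : exists x, LP_feasible K c lam x (lam / 2 * dotv x c).
Proof.
pose G i j := K i j + lam / 2 * c i 0 - lam / 2 * c j 0.
have G_skew i j : G i j = - G j i by rewrite /G K_skew; ring.
have [x [x_ge0 x_sum1 Gx_le0]] := skew_game_optimal n_gt0 G_skew.
pose xv := \col_j x j.
have xv_prob : prob_vec xv by split=> [i|]; rewrite ?mxE //; under eq_bigr do rewrite mxE.
exists xv; split=> // i; rewrite -subr_le0.
suff -> : (K *m xv) i 0 + lam / 2 * c i 0 - lam / 2 * dotv xv c = \sum_j G i j * x j.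
  exact: Gx_le0.
have -> : lam / 2 * c i 0 = \sum_j lam / 2 * c i 0 * x j.
  by rewrite -mulr_sumr x_sum1 mulr1.
rewrite /dotv mxE mulr_sumr -big_split /= -sumrB; apply: eq_bigr => j _.
by rewrite !mxE /G; ring.
Qed.

Lemma LP_optimalE lam x pi :
  LP_optimal K c lam x pi <-> LP_feasible K c lam x pi /\ 0 <= LP_obj c lam x pi.
Proof.
split=> [[x_feas x_max]|[x_feas obj_ge0]]; split=> //.
  have [x0 x0_feas] := LP_value0 lam.
  by apply: le_trans (x_max _ _ x0_feas); rewrite /LP_obj subrr.
by move=> x' pi' x'_feas; exact: le_trans (LP_obj_le0 x'_feas) obj_ge0.
Qed.

End LinearProgram.

Section SymmetricGame.
Variables (R : realFieldType) (n : nat) (A : 'M[R]_n) (c d : 'cV[R]_n).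
Local Notation K := (Kmat A c d).
Local Notation F := (Fcorr K c d).

Lemma Kmat_entry i j : K i j = A i j - 2^-1 * (c i 0 * d j 0).
Proof. by rewrite !mxE big_ord1 !mxE. Qed.

Lemma mulmx_Kmat x i : (A *m x) i 0 = (K *m x) i 0 + dotv d x / 2 * c i 0.
Proof.
rewrite !mxE /dotv !mulr_suml -big_split /=; apply: eq_bigr => j _.
by rewrite Kmat_entry; ring.
Qed.

Lemma LP_feasible_self x pi :
  LP_feasible K c (dotv d x) x pi <-> prob_vec x /\ forall i, (A *m x) i 0 <= pi.
Proof.
by split=> [[Kx_le x_prob]|[x_prob Ax_le]]; split=> // i;
  [rewrite mulmx_Kmat; exact: Kx_le | rewrite -mulmx_Kmat; exact: Ax_le].
Qed.

Lemma Fcorr_range lam v : F lam v -> dmin d <= v <= dmax d.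
Proof. by move=> [x [pi [[[_ x_prob] _] ->]]]; exact: dotv_prob_range. Qed.

Hypothesis hA : A + A^T = c *m d^T.

Lemma Kmat_skew i j : K i j = - K j i.
Proof.
have hAE k l : A k l + A l k = c k 0 * d l 0.
  by have := congr1 (fun M : 'M[R]_n => M k l) hA; rewrite !mxE big_ord1 !mxE.
by rewrite !Kmat_entry -(hAE i j) -(hAE j i); lra.
Qed.

Lemma dotv_payoff x : dotv x (A *m x) = dotv d x / 2 * dotv x c.
Proof.
rewrite {1}/dotv; under eq_bigr do rewrite mulmx_Kmat mulrDr.
rewrite big_split /= -/(dotv x (K *m x)) (dotv_skew x Kmat_skew) add0r.
by rewrite /dotv mulr_sumr; apply: eq_bigr => i _; ring.
Qed.

Hypothesis n_gt0 : (0 < n)%N.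

Lemma LP_optimal_sym_nash lam x pi :
  LP_optimal K c lam x pi -> dotv d x = lam -> sym_nash A x.
Proof.
move=> + dx; rewrite -dx (LP_optimalE _ Kmat_skew n_gt0).
move=> [/LP_feasible_self [x_prob Ax_le] obj_ge0].
apply/sym_nashP; split=> // k; rewrite dotv_payoff.
by apply: le_trans (Ax_le k) _; rewrite -subr_ge0.
Qed.

Lemma sym_nash_Fcorr x : sym_nash A x -> F (dotv d x) (dotv d x).
Proof.
move=> /sym_nashP [x_prob x_avg]; exists x, (dotv x (A *m x)); split=> //.
apply/(LP_optimalE _ Kmat_skew n_gt0); split; first exact/LP_feasible_self.
by rewrite /LP_obj dotv_payoff subrr.
Qed.

Lemma Fcorr_nonempty lam : exists v, F lam v.
Proof.
have [x x_feas] := LP_value0 c Kmat_skew n_gt0 lam.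
exists (dotv d x), x, (lam / 2 * dotv x c); split=> //.
by apply/(LP_optimalE _ Kmat_skew n_gt0); rewrite /LP_obj subrr.
Qed.

Lemma Fcorr_convex lam : convex_set (F lam).
Proof.
move=> a b t [x1 [p1 [x1_opt ->]]] [x2 [p2 [x2_opt ->]]] t_ge0 t_le1.
move: x1_opt x2_opt; rewrite !(LP_optimalE _ Kmat_skew n_gt0).
move=> [x1_feas obj1_ge0] [x2_feas obj2_ge0].
exists (t *: x1 + (1 - t) *: x2), (t * p1 + (1 - t) * p2); split.
  apply/(LP_optimalE _ Kmat_skew n_gt0); split.
    by apply: LP_feasible_comb; rewrite ?t_ge0.
  by rewrite LP_obj_comb addr_ge0 // mulr_ge0 // subr_ge0.
by rewrite dotvDr !dotvZr.
Qed.

End SymmetricGame.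

Theorem theorem4p5 (R : realFieldType) (n : nat) (A : 'M[R]_n)
    (c d : 'cV[R]_n) (hn : (0 < n)%N) (hA : A + A^T = c *m d^T) :
  let K := Kmat A c d in
  let F := Fcorr K c d in
  (forall lam, dmin d <= lam <= dmax d ->
     (exists v, F lam v) /\ convex_set (F lam) /\
     (forall v, F lam v -> dmin d <= v <= dmax d)) /\
  (forall lam x pi, dmin d <= lam <= dmax d ->
     LP_optimal K c lam x pi -> dotv d x = lam -> sym_nash A x) /\
  (forall x, sym_nash A x ->
     let lam := dotv d x in dmin d <= lam <= dmax d /\ F lam lam) /\
  (forall lam, (dmin d <= lam <= dmax d /\ F lam lam) <->
     exists x, sym_nash A x /\ lam = dotv d x).
Proof.
move=> K F.
have nash_fixed x :
    sym_nash A x -> dmin d <= dotv d x <= dmax d /\ F (dotv d x) (dotv d x).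
  move=> x_nash; split; first exact: dotv_prob_range (proj1 x_nash).
  exact: sym_nash_Fcorr.
split; [|split; [|split]].
- move=> lam _; split; first exact: Fcorr_nonempty.
  by split; [exact: Fcorr_convex | exact: Fcorr_range].
- by move=> lam x pi _; exact: LP_optimal_sym_nash.
- exact: nash_fixed.
- move=> lam; split=> [[_ [x [pi [x_opt lam_dx]]]]|[x [x_nash ->]]].
    by exists x; split=> //; exact: LP_optimal_sym_nash x_opt (esym lam_dx).
  exact: nash_fixed.
Qed.
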